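(* Consider the longitudinal random intercept setting described in the context, with $N\ge 2$ individuals, $T\ge 2$ time points, $\rho\in[0,1)$, nominal coverage $1-\alpha$, Hausman pretest significance level $\widetilde{\alpha}$, and estimators $\widehat{\sigma}_{\varepsilon}>0$, $\widehat{\sigma}_{\mu}\ge 0$ of $\sigma_{\varepsilon},\sigma_{\mu}$. Then the scaled expected length of the two-stage interval $K(\widehat{\sigma}_{\varepsilon}, \widehat{\sigma}_{\mu})$, i.e. the expected length of $K(\widehat{\sigma}_{\varepsilon}, \widehat{\sigma}_{\mu})$ divided by the expected length of $J_{\text{adj}}(\widehat{\sigma}_{\varepsilon})$, is equal to $$ \frac{ z_{1-\alpha/2}}{\Phi^{-1}((c^*+1)/2)} \cdot \frac{ E \left( (\widehat{\sigma}_{\varepsilon}/\sigma_{\varepsilon}) \left( \sum_{i=1}^N \sum_{t=1}^T (u_{it} - \overline{u}_i)^2 \right)^{-1/2} \left( \widehat{w}^{1/2}\, \mathcal{I}(\mathcal{B}) + \mathcal{I}(\mathcal{B}^c) \right) \right)}{E \left( (\widehat{\sigma}_{\varepsilon}/\sigma_{\varepsilon}) \left( \sum_{i=1}^N \sum_{t=1}^T (u_{it} - \overline{u}_i)^2 \right)^{-1/2} \right)}, $$ where $\overline{u}_i = T^{-1}\sum_{t=1}^T u_{it}$.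
   Context: Model: for $i=1,\dots,N$ and $t=1,\dots,T$, $y_{it} = a + \beta x_{it} + \mu_i + \varepsilon_{it}$, where the $\varepsilon_{it}$ are i.i.d. $N(0,\sigma_\varepsilon^2)$, independent of the vectors $(\mu_i, x_{i1},\dots,x_{iT})$, $i=1,\dots,N$, which are i.i.d. multivariate normal with mean zero and covariance matrix $\begin{bmatrix}\sigma_\mu^2 & \widetilde{\tau}\sigma_\mu\sigma_x e^{\prime}\\ \widetilde{\tau}\sigma_\mu\sigma_x e & \sigma_x^2 G\end{bmatrix}$, with $e$ the $T$-vector of ones and $G$ the $T\times T$ matrix with 1's on the diagonal and $\rho$ off the diagonal. Here $\sigma_\varepsilon,\sigma_\mu,\sigma_x>0$. The non-exogeneity parameter is $\tau = \widetilde{\tau}\,(T/(1+(T-1)\rho))^{1/2}\in(-1,1)$ (it equals $\mathrm{Corr}(\mu_i,\overline{x}_i)$), and $\psi=\sigma_\mu/\sigma_\varepsilon$. The covariates are represented as $x_{it}/\sigma_x = (1-\rho)^{1/2}u_{it} + \rho^{1/2}v_i$, where $u_{11},\dots,u_{NT},v_1,\dots,v_N$ are i.i.d. $N(0,1)$ and independent of the $\varepsilon_{it}$; $x$ denotes the vector of all $x_{it}$. Notation: $\overline{y}_i = T^{-1}\sum_t y_{it}$, $\overline{x}_i=T^{-1}\sum_t x_{it}$, $\overline{x}=(NT)^{-1}\sum_{i,t}x_{it}$, $\overline{y}=(NT)^{-1}\sum_{i,t}y_{it}$, $\mathrm{SSB}=\sum_i(\overline{x}_i-\overline{x})^2$,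 $\mathrm{SSW}=\sum_{i,t}(x_{it}-\overline{x}_i)^2$, $r(x)=\mathrm{SSB}/\mathrm{SSW}$, $q(\psi,T)=\psi^2+1/T$, $z_c=\Phi^{-1}(c)$ with $\Phi$ the $N(0,1)$ cdf, and $\mathcal{I}(\mathcal{A})$ is 1 if statement $\mathcal{A}$ is true and 0 otherwise. Estimators: the within (fixed effects) estimator $\widetilde{\beta}_W = \sum_{i,t}(x_{it}-\overline{x}_i)(y_{it}-\overline{y}_i)/\mathrm{SSW}$, with $\mathrm{Var}(\widetilde{\beta}_W\mid x)=\sigma_\varepsilon^2/\mathrm{SSW}$; the between estimator $\widetilde{\beta}_B=\sum_i(\overline{x}_i-\overline{x})(\overline{y}_i-\overline{y})/\mathrm{SSB}$ (OLS slope of $\overline{y}_i$ on $\overline{x}_i$ with intercept), with $\mathrm{Var}_0(\widetilde{\beta}_B\mid x)=(\sigma_\mu^2+\sigma_\varepsilon^2/T)/\mathrm{SSB}$ (its conditional variance when $\tau=0$); the GLS estimator for the random intercept model with $\tau=0$, $\widehat{\beta}(\psi)=\big(\mathrm{SSW}\,\widetilde{\beta}_W + (\mathrm{SSB}/q(\psi,T))\widetilde{\beta}_B\big)/\big(\mathrm{SSW}+\mathrm{SSB}/q(\psi,T)\big)$, with $\mathrm{Var}_0(\widehat{\beta}(\psi)\mid x)=\sigma_\varepsilon^2/(\mathrm{SSW}+\mathrm{SSB}/q(\psi,T))$. Two-stage interval: the Hausman statistic is $H(\sigma_\varepsilon,\sigma_\mu)=(\widetilde{\beta}_W-\widetilde{\beta}_B)^2/\big(\mathrm{Var}(\widetilde{\beta}_W\mid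 x)+\mathrm{Var}_0(\widetilde{\beta}_B\mid x)\big)$. If $H(\sigma_\varepsilon,\sigma_\mu)\le z^2_{1-\widetilde{\alpha}/2}$, $K(\sigma_\varepsilon,\sigma_\mu)$ is $I(\psi)=[\widehat{\beta}(\psi)\pm z_{1-\alpha/2}(\mathrm{Var}_0(\widehat{\beta}(\psi)\mid x))^{1/2}]$; otherwise it is $J(\sigma_\varepsilon)=[\widetilde{\beta}_W\pm z_{1-\alpha/2}\sigma_\varepsilon/\mathrm{SSW}^{1/2}]$. $K(\widehat{\sigma}_\varepsilon,\widehat{\sigma}_\mu)$ is obtained by replacing $\sigma_\varepsilon,\sigma_\mu$ everywhere (including $\psi$ by $\widehat{\psi}=\widehat{\sigma}_\mu/\widehat{\sigma}_\varepsilon$) by the estimators. $\mathcal{B}$ is the statement $H(\widehat{\sigma}_\varepsilon,\widehat{\sigma}_\mu)\le z^2_{1-\widetilde{\alpha}/2}$, and $\widehat{w}=q(\widehat{\psi},T)/(q(\widehat{\psi},T)+r(x))$. Adjusted interval: fix $\widetilde{\rho}\in(0,1)$; $c_{\min}$ is the coverage probability $P(\beta\in K(\widehat{\sigma}_\varepsilon,\widehat{\sigma}_\mu))$ minimized over $\tau\in(-1,1)$, $\psi\in(0,\infty)$ and $\rho\in[0,\widetilde{\rho}]$. For $c\in(0,1)$, $J_c(\widehat{\sigma}_\varepsilon)=[\widetilde{\beta}_W\pm\Phi^{-1}((c+1)/2)\,\widehat{\sigma}_\varepsilon/\mathrm{SSW}^{1/2}]$; $c^*$ is the value of $c$ with $P(\beta\in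 J_c(\widehat{\sigma}_\varepsilon))=c_{\min}$, and $J_{\text{adj}}(\widehat{\sigma}_\varepsilon)=J_{c^*}(\widehat{\sigma}_\varepsilon)$. *)

From HB Require Import structures.
From mathcomp Require Import all_boot all_order all_algebra.
From mathcomp Require Import all_classical all_reals all_analysis.
Set Implicit Arguments. Unset Strict Implicit. Unset Printing Implicit Defensive.
Import Order.TTheory GRing.Theory Num.Theory Num.Def.
Local Open Scope classical_set_scope.
Local Open Scope ring_scope.

Section Normal.
Context {R : realType}.

Definition Phi (x : R) : R := fine (normal_prob 0 1 `]-oo, x]).

(* Phi^{-1}(c) as the (generalized) quantile inf {x | c <= Phi x};
   for c in (0,1) this is the usual inverse of Phi. *)
Definition zq (c : R) : R := inf [set x | c <= Phi x].

Definition std_normal_rv d (Om : measurableType d) (P : probability Om R)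
  (X : Om -> R) : Prop :=
  forall A : set R, measurable A -> P (X @^-1` A) = normal_prob 0 1 A.

Definition mutually_independent d (Om : measurableType d)
  (P : probability Om R) (I : finType) (X : I -> Om -> R) : Prop :=
  forall B : I -> set R, (forall i, measurable (B i)) ->
    P (\bigcap_(i in [set: I]) (X i @^-1` B i)) =
    (\prod_(i : I) P (X i @^-1` B i))%E.
End Normal.

Section Stats.
Context {R : realType} (N T : nat).
Notation arr := ('I_N -> 'I_T -> R).

Definition rowmean (z : arr) (i : 'I_N) : R := (T%:R)^-1 * \sum_(t < T) z i t.
Definition grandmean (z : arr) : R :=
  ((N * T)%:R)^-1 * \sum_(i < N) \sum_(t < T) z i t.
Definition SSB (x : arr) : R := \sum_(i < N) (rowmean x i - grandmean x) ^+ 2.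
Definition SSW (x : arr) : R :=
  \sum_(i < N) \sum_(t < T) (x i t - rowmean x i) ^+ 2.
Definition rx (x : arr) : R := SSB x / SSW x.
Definition qf (psi : R) : R := psi ^+ 2 + (T%:R)^-1.

Definition betaW (y x : arr) : R :=
  (\sum_(i < N) \sum_(t < T) (x i t - rowmean x i) * (y i t - rowmean y i))
  / SSW x.
Definition betaB (y x : arr) : R :=
  (\sum_(i < N) (rowmean x i - grandmean x) * (rowmean y i - grandmean y))
  / SSB x.
Definition betaGLS (psi : R) (y x : arr) : R :=
  (SSW x * betaW y x + (SSB x / qf psi) * betaB y x)
  / (SSW x + SSB x / qf psi).
Definition Hausman (se sm : R) (y x : arr) : R :=
  (betaW y x - betaB y x) ^+ 2
  / (se ^+ 2 / SSW x + (sm ^+ 2 + se ^+ 2 / T%:R) / SSB x).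

(* intervals are represented as (centre, half-width) = [centre +- half-width] *)
Definition covers (b : R) (I : R * R) : bool := `|b - I.1| <= I.2.
Definition ilength (I : R * R) : R := 2 * I.2.

Definition pretestB (alphat se sm : R) (y x : arr) : bool :=
  Hausman se sm y x <= zq (1 - alphat / 2) ^+ 2.

Definition Kint (alpha alphat se sm : R) (y x : arr) : R * R :=
  if pretestB alphat se sm y x then
    (betaGLS (sm / se) y x,
     zq (1 - alpha / 2) * Num.sqrt (se ^+ 2 / (SSW x + SSB x / qf (sm / se))))
  else (betaW y x, zq (1 - alpha / 2) * (se / Num.sqrt (SSW x))).

Definition Jc (c se : R) (y x : arr) : R * R :=
  (betaW y x, zq ((c + 1) / 2) * (se / Num.sqrt (SSW x))).

Definition what (se sm : R) (x : arr) : R :=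
  qf (sm / se) / (qf (sm / se) + rx x).

Definition xdata (sx rho : R) (u : arr) (v : 'I_N -> R) : arr :=
  fun i t => sx * (Num.sqrt (1 - rho) * u i t + Num.sqrt rho * v i).
(* mu_i = sm (tau * (xbar_i/sx)/sd(xbar_i/sx) + (1-tau^2)^{1/2} w_i), with
   w_i i.i.d. N(0,1) independent of everything else: this gives
   (mu_i, x_i) jointly normal with Var mu_i = sm^2 and
   Cov(mu_i, x_it) = tau~ sm sx, tau = Corr(mu_i, xbar_i). *)
Definition mudata (sm tau rho : R) (u : arr) (v w : 'I_N -> R) (i : 'I_N) : R :=
  sm * (tau * Num.sqrt (T%:R / (1 + (T%:R - 1) * rho))
          * (Num.sqrt (1 - rho) * rowmean u i + Num.sqrt rho * v i)
        + Num.sqrt (1 - tau ^+ 2) * w i).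
Definition ydata (a beta se sm sx tau rho : R) (u : arr) (v w : 'I_N -> R)
  (e : arr) : arr :=
  fun i t => a + beta * xdata sx rho u v i t + mudata sm tau rho u v w i
             + se * e i t.
End Stats.

(* index set of the underlying i.i.d. N(0,1) variables:
   u_it, eps_it/sigma_eps, v_i, w_i *)
Definition src (N T : nat) : finType :=
  (('I_N * 'I_T) + ('I_N * 'I_T) + 'I_N + 'I_N)%type.

Section Model.
Context {R : realType} (N T : nat) d (Om : measurableType d)
  (Z : src N T -> Om -> R).
Definition uZ (om : Om) : 'I_N -> 'I_T -> R :=
  fun i t => Z (inl (inl (inl (i, t)))) om.
Definition eZ (om : Om) : 'I_N -> 'I_T -> R :=
  fun i t => Z (inl (inl (inr (i, t)))) om.
Definition vZ (om : Om) : 'I_N -> R := fun i => Z (inl (inr i)) om.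
Definition wZ (om : Om) : 'I_N -> R := fun i => Z (inr i) om.

Definition Xobs (sx rho : R) (om : Om) : 'I_N -> 'I_T -> R :=
  xdata sx rho (uZ om) (vZ om).
Definition Yobs (a beta se sm sx tau rho : R) (om : Om) : 'I_N -> 'I_T -> R :=
  ydata a beta se sm sx tau rho (uZ om) (vZ om) (wZ om) (eZ om).
End Model.

From HB Require Import structures.
From mathcomp Require Import all_boot all_order all_algebra.
From mathcomp Require Import all_classical all_reals all_analysis.
From mathcomp Require Import ring lra.
Import Order.TTheory GRing.Theory Num.Theory Num.Def.
Local Open Scope classical_set_scope.
Local Open Scope ring_scope.

(* On the complement of the null event {SSW(u) = 0}, both interval lengths
   factor as a common deterministic constant times the random scale
   (sehat / sigma_eps) SSW(u)^{-1/2}: indeed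
   SSW(x) = sigma_x^2 (1 - rho) SSW(u), the half-width of J_c is
   Phi^{-1}((c + 1) / 2) sehat / SSW(x)^{1/2}, and on the pretest event the
   half-width of K is z_{1-alpha/2} sehat / SSW(x)^{1/2} times w-hat^{1/2}.
   The constant cancels in the ratio of expectations.  The event {SSW(u) = 0}
   lies in {u_11 = u_12}, which is null because two independent standard
   normals coincide with probability zero.  The identity holds for every c*. *)

Lemma measurable_inv {R : realType} : measurable_fun [set: R] (@GRing.inv R).
Proof.
rewrite (_ : GRing.inv = fun x : R => if x == 0 then 0 else x^-1); last first.
  by apply/funext => x; case: eqP => // ->; rewrite invr0.
apply: measurable_fun_if => //.
- apply: (measurable_fun_bool true).
  rewrite setTI (_ : _ @^-1` _ = [set 0]); first exact: measurable_set1.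
  by apply/seteqP; split => x /=; [move/eqP|move=> ->; rewrite eqxx].
- apply: (measurable_funS (E := ~` [set (0:R)])) => //.
  + by apply: measurableC; exact: measurable_set1.
  + by move=> x [_ /=] /negbT /eqP.
  apply: measurable_realfun.open_continuous_measurable_fun.
  + by rewrite openC; apply/accessible_closed_set1/hausdorff_accessible/Rhausdorff.
  + by move=> x; rewrite inE => /eqP x0; exact: inv_continuous.
Qed.

Section measurable_real.
Context {R : realType} d (Om : measurableType d).
Implicit Types (f g : Om -> R) (b : Om -> bool).

Lemma measurable_fun_invr f : measurable_fun setT f ->
  measurable_fun setT (fun x => (f x)^-1).
Proof. exact: measurableT_comp measurable_inv. Qed.

Lemma measurable_fun_sqrt f : measurable_fun setT f ->
  measurable_fun setT (fun x => Num.sqrt (f x)).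
Proof.
exact: measurableT_comp
  (measurable_realfun.continuous_measurable_fun (@sqrt_continuous R)).
Qed.

Lemma measurable_fun_natr_bool b : measurable_fun setT b ->
  measurable_fun setT (fun x => (b x)%:R : R).
Proof.
move=> mb; rewrite (_ : (fun x => _) = fun x => if b x then 1 else 0).
  exact: measurable_fun_ifT.
by apply/funext => x; case: (b x).
Qed.

Lemma measurable_preimageT f (A : set R) : measurable_fun setT f ->
  measurable A -> measurable (f @^-1` A).
Proof. by move=> mf mA; rewrite -[_ @^-1` _]setTI; exact: mf. Qed.

Lemma measurable_eq_set f g : measurable_fun setT f -> measurable_fun setT g ->
  measurable [set x | f x = g x].
Proof.
move=> mf mg; rewrite (_ : [set x | _] = (f \- g) @^-1` [set 0]).
  by apply: measurable_preimageT; [exact: measurable_realfun.measurable_funB|].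
by apply/seteqP; split => x /=; [move=> ->; rewrite subrr|move/eqP; rewrite subr_eq0 => /eqP].
Qed.

End measurable_real.

Ltac measurable_real := first
  [ exact: measurable_cst | assumption
  | match goal with H : forall _, measurable_fun _ _ |- _ => exact: H end
  | match goal with H : forall _ _, measurable_fun _ _ |- _ => exact: H end
  | apply: measurable_realfun.measurable_funD; measurable_real
  | apply: measurable_realfun.measurable_funM; measurable_real
  | apply: measurable_realfun.measurable_funN; measurable_real
  | apply: measurable_realfun.measurable_funX; measurable_real
  | apply: measurable_fun_invr; measurable_real
  | apply: measurable_fun_sqrt; measurable_real
  | apply: measurable_sum => ?; measurable_real
  | apply: measurable_fun_ifT; measurable_real
  | apply: measurable_fun_natr_bool; measurable_real
  | apply: (measurableT_comp (f := negb)) => //; measurable_real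
  | apply: measurable_realfun.measurable_fun_ler; measurable_real ].

Lemma normal_prob_itv_le {R : realType} (x w : R) : 0 <= w ->
  (normal_prob 0 1 `[x, (x + w)%R[%classic <= (normal_peak 1 * w)%:E)%E.
Proof.
move=> w0.
apply: (@le_trans _ _ (\int[lebesgue_measure]_(y in `[x, (x + w)%R[%classic)
    (normal_peak (1:R))%:E))%E.
  apply: ge0_le_integral => //=.
  - by move=> y _; rewrite lee_fin normal_pdf_ge0.
  - apply/measurable_realfun.measurable_EFinP.
    exact: (measurable_funS _ _ (measurable_normal_pdf 0 1)).
  - by move=> y _; rewrite lee_fin; apply: normal_pdf_ub; rewrite oner_eq0.
rewrite integral_cst //= lebesgue_measure_itv /=.
case: ifP => _; last by rewrite mule0 lee_fin mulr_ge0 ?normal_peak_ge0.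
by rewrite -EFinB -EFinM lee_fin addrAC subrr add0r.
Qed.

Definition grid_point {R : realType} (m k : nat) : R := - m%:R + k%:R / (m ^ 2)%:R.

Lemma grid_cover {R : realType} (m : nat) (x : R) : (0 < m)%N -> `|x| < m%:R ->
  exists2 k, (k < 2 * m ^ 3)%N &
    `[grid_point m k, grid_point m k + ((m ^ 2)%:R)^-1[%classic x.
Proof.
move=> m0 hx.
have m2 : 0 < ((m ^ 2)%:R : R) by rewrite ltr0n expn_gt0 m0.
move: hx; rewrite ltr_norml => /andP[xl xr].
set y := (x + m%:R) * (m ^ 2)%:R.
have y0 : 0 <= y by rewrite /y mulr_ge0 ?ltW //; lra.
exists (truncn y).
  rewrite truncn_lt_nat // /y natrM !natrX.
  rewrite (_ : 2%:R * m%:R ^+ 3 = (m%:R + m%:R) * m%:R ^+ 2 :> R); last by ring.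
  by rewrite ltr_pM2r ?exprn_gt0 ?ltr0n //; lra.
rewrite /= in_itv /= /grid_point.
have k1 : (truncn y)%:R <= y by rewrite -truncn_ge_nat.
have k2 : y < (truncn y).+1%:R by rewrite -truncn_le_nat.
apply/andP; split.
  have : (truncn y)%:R / (m ^ 2)%:R <= x + m%:R by rewrite ler_pdivrMr.
  lra.
have : x + m%:R < (truncn y).+1%:R / (m ^ 2)%:R by rewrite ltr_pdivlMr.
rewrite -natr1 mulrDl mul1r; lra.
Qed.

Lemma measurable_norm_ge {R : realType} (m : R) : measurable [set x : R | m <= `|x|].
Proof.
rewrite (_ : [set x | _] = normr @^-1` `[m, +oo[%classic).
  by apply: measurable_preimageT => //; exact: normr_measurable.
by apply/seteqP; split => x /=; rewrite in_itv /= andbT.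
Qed.

Lemma normal_tail_cvg0 {R : realType} :
  (fun n : nat => fine (normal_prob (0:R) 1 [set x | n.+1%:R <= `|x|])) @ \oo --> 0.
Proof.
set F := fun n : nat => [set x : R | n.+1%:R <= `|x|].
have mF n : measurable (F n) by exact: measurable_norm_ge.
have F0 : \bigcap_n F n = set0.
  apply/seteqP; split => x // /(_ (truncn `|x|) Logic.I); rewrite /F /= => x_ge.
  have : `|x| < (truncn `|x|).+1%:R by rewrite -truncn_le_nat.
  lra.
have : (normal_prob (0:R) 1 \o F) @ \oo --> normal_prob (0:R) 1 (\bigcap_n F n).
  apply: nonincreasing_cvg_mu => //.
  - apply: (le_lt_trans (probability_le1 (normal_prob (0:R) 1) (mF 0%N))); exact: ltry.
  - exact: bigcapT_measurable.
  - by move=> n k nk; apply/subsetPset => x /=; apply: le_trans; rewrite ler_nat.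
by rewrite F0 measure0 => /fine_cvgP[].
Qed.

Section independent_normals.
Context {R : realType} d (Om : measurableType d) (P : probability Om R).

Lemma mutually_independent_pair (I : finType) (Z : I -> Om -> R) a b
    (A B : set R) :
  a != b -> mutually_independent P Z -> measurable A -> measurable B ->
  P (Z a @^-1` A `&` Z b @^-1` B) = (P (Z a @^-1` A) * P (Z b @^-1` B))%E.
Proof.
move=> ab indZ mA mB.
pose C i := if i == a then A else if i == b then B else setT.
have mC i : measurable (C i) by rewrite /C; case: ifP => _ //; case: ifP.
have := indZ C mC.
have -> : \bigcap_(i in [set: I]) (Z i @^-1` C i) = Z a @^-1` A `&` Z b @^-1` B.
  apply/seteqP; split => x.
    move=> h; split; [have := h a Logic.I|have := h b Logic.I];
      by rewrite /C ?eqxx // eq_sym (negbTE ab).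
  by move=> [ha hb] i _; rewrite /C; case: eqP => [->//|_]; case: eqP => [->//|_].
move=> ->; rewrite (bigD1 a) //= (bigD1 b) /=; last by rewrite eq_sym.
rewrite big1 ?mule1; first by rewrite /C eqxx eq_sym (negbTE ab) eqxx.
move=> i /andP[ib ia]; rewrite /C (negbTE ia) (negbTE ib) preimage_setT.
exact: probability_setT.
Qed.

Variables (X Y : Om -> R).
Hypotheses (mX : measurable_fun setT X) (mY : measurable_fun setT Y).
Hypotheses (lawX : std_normal_rv P X) (lawY : std_normal_rv P Y).
Hypothesis indXY : forall A B : set R, measurable A -> measurable B ->
  P (X @^-1` A `&` Y @^-1` B) = (P (X @^-1` A) * P (Y @^-1` B))%E.

(* Cover {X = Y} by {|X| >= m} and the 2m^3 squares of side 1/m^2 on the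
   diagonal of [-m, m)^2, each of probability at most (normal_peak 1 / m^2)^2. *)
Lemma prob_eq_le (m : nat) : (0 < m)%N ->
  (P [set x | X x = Y x] <= normal_prob 0 1 [set x : R | (m%:R <= `|x|)%R] +
     ((2 * m ^ 3)%:R * (normal_peak 1 * ((m ^ 2)%:R)^-1) ^+ 2)%:E)%E.
Proof.
move=> m0; set w : R := ((m ^ 2)%:R)^-1.
have w0 : 0 <= w by rewrite invr_ge0 ler0n.
pose I k := `[grid_point m k, grid_point m k + w[%classic.
pose A k := X @^-1` I k `&` Y @^-1` I k.
pose U := \big[setU/set0]_(k < 2 * m ^ 3) A k.
have mA k : measurable (A k).
  by apply: measurableI; apply: measurable_preimageT => //; exact: measurable_itv.
have mU : measurable U by exact: bigsetU_measurable.
have mT : measurable (X @^-1` [set x | m%:R <= `|x|]).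
  exact: measurable_preimageT (measurable_norm_ge _).
have sub : [set x | X x = Y x] `<=` X @^-1` [set x | m%:R <= `|x|] `|` U.
  move=> x /= XY; case: (lerP m%:R `|X x|) => hx; first by left.
  right; have [k km hk] := @grid_cover _ m _ m0 hx.
  by rewrite /U -bigcup_mkord; exists k => //; split => //=; rewrite -XY.
apply: le_trans (le_measure _ _ _ sub) _; rewrite ?inE //.
- exact: measurable_eq_set.
- exact: measurableU.
apply: le_trans (measureU2 _ _ _) _ => //.
apply: leeD; first by rewrite -lawX //; exact: measurable_norm_ge.
apply: (@le_trans _ _ (\sum_(k < 2 * m ^ 3) P (A k))%E).
  exact: (@content_subadditive _ _ _ P U A).
apply: (@le_trans _ _ (\sum_(k < 2 * m ^ 3) (((normal_peak 1 * w) ^+ 2)%R)%:E)%E).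
  apply: lee_sum => k _.
  rewrite /A indXY ?lawX ?lawY; try exact: measurable_itv.
  by rewrite expr2 EFinM; apply: lee_pmul => //; exact: normal_prob_itv_le.
by rewrite sumEFin sumr_const card_ord mulr_natl.
Qed.

Lemma prob_eq0 : P [set x | X x = Y x] = 0%E.
Proof.
set c := normal_peak (1:R).
have c0 : 0 < c by apply: normal_peak_gt0; rewrite oner_eq0.
apply/eqP; rewrite eq_le measure_ge0 andbT.
apply/lee_addgt0Pr => e e0; rewrite add0e.
have e2 : 0 < e / 2 by rewrite divr_gt0.
have /cvgrPdist_lt/(_ _ e2) tail_small := @normal_tail_cvg0 R.
have [n [tail_n large_n]] := filter_ex (filterS2 _ (fun n A B => conj A B)
  tail_small (nbhs_infty_ge (truncn (4 * c ^+ 2 / e)))).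
apply: (le_trans (prob_eq_le n.+1 (ltn0Sn n))).
rewrite (_ : (2 * n.+1 ^ 3)%:R * (c * ((n.+1 ^ 2)%:R)^-1) ^+ 2 =
  2 * c ^+ 2 / n.+1%:R); last first.
  by rewrite natrM !natrX; field; rewrite addrC natr1 pnatr_eq0.
have tail_fin : normal_prob (0:R) 1 [set x | n.+1%:R <= `|x|] \is a fin_num.
  rewrite ge0_fin_numE ?measure_ge0 //.
  apply: (le_lt_trans (probability_le1 (normal_prob (0:R) 1) (measurable_norm_ge _))).
  exact: ltry.
rewrite -(fineK tail_fin) -EFinD lee_fin [leRHS]splitr; apply/ltW/ltrD.
  by move: tail_n; rewrite /= sub0r normrN; exact: le_lt_trans (ler_norm _).
have : 4 * c ^+ 2 / e < n.+1%:R by rewrite -truncn_le_nat.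
rewrite ltr_pdivrMr // => h; rewrite ltr_pdivrMr ?ltr0Sn //; nra.
Qed.

End independent_normals.

Section within_between.
Context {R : realType} {N T : nat}.
Notation arr := ('I_N -> 'I_T -> R).
Hypothesis T_gt0 : (0 < T)%N.

Lemma rowmean_xdata (sx rho : R) (u : arr) v i :
  rowmean (xdata sx rho u v) i =
  sx * (Num.sqrt (1 - rho) * rowmean u i + Num.sqrt rho * v i).
Proof.
rewrite /rowmean /xdata -mulr_sumr big_split /= -mulr_sumr sumr_const card_ord.
have T_neq0 : (T%:R : R) != 0 by rewrite pnatr_eq0 -lt0n.
by rewrite -mulr_natr; field.
Qed.

Lemma SSW_xdata (sx rho : R) (u : arr) v : rho <= 1 ->
  SSW (xdata sx rho u v) = sx ^+ 2 * (1 - rho) * SSW u.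
Proof.
move=> rho1; rewrite /SSW mulr_sumr; apply: eq_bigr => i _.
rewrite mulr_sumr; apply: eq_bigr => t _.
rewrite rowmean_xdata /xdata -[in RHS](@sqr_sqrtr _ (1 - rho)) ?subr_ge0 //.
ring.
Qed.

Lemma SSW_ge0 (x : arr) : 0 <= SSW x.
Proof. by rewrite sumr_ge0 // => i _; rewrite sumr_ge0 // => t _; exact: sqr_ge0. Qed.

Lemma SSW_eq0 (x : arr) : SSW x = 0 -> forall i t, x i t = rowmean x i.
Proof.
move=> SSW0 i t.
have row0 := @psumr_eq0P _ _ _ _ (fun i _ => sumr_ge0 _ (fun t _ => sqr_ge0 _)) SSW0 i isT.
have := @psumr_eq0P _ _ _ _ (fun t _ => sqr_ge0 _) row0 t isT.
by move/eqP; rewrite sqrf_eq0 subr_eq0 => /eqP.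
Qed.

Lemma SSB_ge0 (x : arr) : 0 <= SSB x.
Proof. by rewrite sumr_ge0 // => i _; exact: sqr_ge0. Qed.

Lemma qf_gt0 (psi : R) : 0 < qf T psi.
Proof. by rewrite ltr_wpDl ?sqr_ge0 // invr_gt0 ltr0n. Qed.

Lemma ilength_Kint (alpha alphat se sm : R) (y x : arr) :
  0 < se -> 0 < SSW x ->
  ilength (Kint alpha alphat se sm y x) =
  2 * zq (1 - alpha / 2) * (se / Num.sqrt (SSW x)) *
   (Num.sqrt (what se sm x) * (pretestB alphat se sm y x)%:R +
    (~~ pretestB alphat se sm y x)%:R).
Proof.
move=> se0 SSW0; rewrite /ilength /Kint.
case: (pretestB _ _ _ _ _) => /=; last by rewrite mulr0 add0r !mulr1 mulrA.
rewrite mulr1 addr0 /what /rx.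
have q0 := qf_gt0 (sm / se); have B0 := SSB_ge0 x.
set S := SSW x; set B := SSB x; set q := qf T (sm / se).
have -> : se ^+ 2 / (S + B / q) = se ^+ 2 / S * (q / (q + B / S)).
  by field; rewrite !gt_eqF // ltr_wpDr // mulr_gt0.
rewrite sqrtrM; last by rewrite divr_ge0 ?sqr_ge0 // ltW.
by rewrite sqrtrM ?sqr_ge0 // sqrtr_sqr ger0_norm ?ltW // sqrtrV ?ltW // !mulrA.
Qed.

Lemma within_sd_xdata (se se' sx rho : R) (u : arr) v : se != 0 -> rho <= 1 ->
  se' / Num.sqrt (SSW (xdata sx rho u v)) =
  se / Num.sqrt (sx ^+ 2 * (1 - rho)) * (se' / se * (Num.sqrt (SSW u))^-1).
Proof.
move=> se0 rho1; rewrite SSW_xdata // sqrtrM; last by rewrite mulr_ge0 ?sqr_ge0 ?subr_ge0.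
rewrite invfM.
by move: (Num.sqrt _)^-1 (Num.sqrt (SSW u))^-1 => k1 k2; field.
Qed.

Lemma ilength_Jc_xdata (c se se' sx rho : R) (y u : arr) v :
  se != 0 -> rho <= 1 ->
  ilength (Jc c se' y (xdata sx rho u v)) =
  2 * (se / Num.sqrt (sx ^+ 2 * (1 - rho))) * zq ((c + 1) / 2) *
  (se' / se * (Num.sqrt (SSW u))^-1).
Proof. by move=> se0 rho1; rewrite /ilength /= (within_sd_xdata se) //; ring. Qed.

Lemma ilength_Kint_xdata (alpha alphat se se' sm' sx rho : R) (y u : arr) v :
  0 < se -> 0 < se' -> 0 < sx -> rho < 1 -> SSW u != 0 ->
  ilength (Kint alpha alphat se' sm' y (xdata sx rho u v)) =
  2 * (se / Num.sqrt (sx ^+ 2 * (1 - rho))) * zq (1 - alpha / 2) *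
  (se' / se * (Num.sqrt (SSW u))^-1 *
   (Num.sqrt (what se' sm' (xdata sx rho u v)) *
      (pretestB alphat se' sm' y (xdata sx rho u v))%:R +
    (~~ pretestB alphat se' sm' y (xdata sx rho u v))%:R)).
Proof.
move=> se0 se'0 sx0 rho1 SSWu_neq0.
have SSWu_gt0 : 0 < SSW u by rewrite lt0r SSWu_neq0 SSW_ge0.
rewrite ilength_Kint //; last by rewrite SSW_xdata ?ltW // !mulr_gt0 ?exprn_gt0 ?subr_gt0.
by rewrite (within_sd_xdata se) ?gt_eqF ?ltW //; ring.
Qed.

End within_between.

Section measurable_statistics.
Context {R : realType} {d} {Om : measurableType d} {N T : nat}.
Context {y x : Om -> 'I_N -> 'I_T -> R} {se sm : Om -> R}.
Hypotheses (my : forall i t, measurable_fun setT (fun om => y om i t))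
  (mx : forall i t, measurable_fun setT (fun om => x om i t))
  (mse : measurable_fun setT se) (msm : measurable_fun setT sm).

Lemma measurable_SSW_fun : measurable_fun setT (fun om => SSW (x om)).
Proof. rewrite /SSW /rowmean; measurable_real. Qed.

Lemma measurable_SSB_fun : measurable_fun setT (fun om => SSB (x om)).
Proof. rewrite /SSB /rowmean /grandmean; measurable_real. Qed.

Lemma measurable_what : measurable_fun setT (fun om => what (se om) (sm om) (x om)).
Proof.
have := measurable_SSW_fun; have := measurable_SSB_fun => mSSB mSSW.
rewrite /what /qf /rx; measurable_real.
Qed.

Lemma measurable_pretestB (alphat : R) :
  measurable_fun setT (fun om => pretestB alphat (se om) (sm om) (y om) (x om)).
Proof.
have := measurable_SSW_fun; have := measurable_SSB_fun => mSSB mSSW.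
rewrite /pretestB /Hausman /betaW /betaB /rowmean /grandmean; measurable_real.
Qed.

Lemma measurable_ilength_Jc (c : R) :
  measurable_fun setT (fun om => ilength (Jc c (se om) (y om) (x om))).
Proof. have := measurable_SSW_fun => mSSW; rewrite /ilength /Jc /=; measurable_real. Qed.

Lemma measurable_ilength_Kint (alpha alphat : R) :
  measurable_fun setT (fun om => ilength (Kint alpha alphat (se om) (sm om) (y om) (x om))).
Proof.
have := measurable_pretestB alphat; have := measurable_SSW_fun.
have := measurable_SSB_fun => mSSB mSSW mB.
rewrite /ilength /Kint; under eq_fun do rewrite (fun_if snd) /=.
rewrite /qf; measurable_real.
Qed.

End measurable_statistics.

Lemma div_cancel_common_factor {F : fieldType} (c a b x y : F) : c != 0 ->
  c * a * x / (c * b * y) = a / b * (x / y).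
Proof.
move=> c0; transitivity (c / c * (a / b * (x / y))); first by rewrite !invfM; ring.
by rewrite divff // mul1r.
Qed.

Lemma fine_EFinM {R : realType} (r : R) (x : \bar R) :
  fine (r%:E * x)%E = r * fine x.
Proof.
case: x => [y||] /=; rewrite ?mulr0 //.
- by rewrite mulry; case: sgrP => _; rewrite ?mul0e ?mul1e ?mulN1e.
- by rewrite mulrNy; case: sgrP => _; rewrite ?mul0e ?mul1e ?mulN1e.
Qed.

Section expectation_scale.
Context {R : realType} d (Om : measurableType d) (P : probability Om R).

Lemma integral_EFinZl (k : R) (f : Om -> R) :
  measurable_fun setT f -> (forall x, 0 <= f x) ->
  (\int[P]_x (k * f x)%:E = k%:E * \int[P]_x (f x)%:E)%E.
Proof.
move=> mf f0; have mEf := (measurable_realfun.measurable_EFinP _ _).2 mf.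
have [k0|k0] := lerP 0 k.
  under eq_integral do rewrite EFinM.
  by apply: ge0_integralZl_EFin => // x _; rewrite lee_fin.
have -> : (\int[P]_x (k * f x)%:E = \int[P]_x (- ((- k) * f x)%:E))%E.
  by apply: eq_integral => x _; rewrite mulNr EFinN oppeK.
rewrite integral_ge0N; last by move=> x _; rewrite lee_fin mulr_ge0 // oppr_ge0 ltW.
under eq_integral do rewrite EFinM.
rewrite ge0_integralZl_EFin ?oppr_ge0 ?EFinN ?mulNe ?oppeK ?ltW //.
by move=> x _; rewrite lee_fin.
Qed.

Lemma expectation_ae_scale (k : R) (F f : Om -> R) :
  measurable_fun setT F -> measurable_fun setT f -> (forall x, 0 <= f x) ->
  {ae P, forall x, F x = k * f x} -> ('E_P[F] = k%:E * 'E_P[f])%E.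
Proof.
move=> mF mf f0 Fkf; rewrite unlock -integral_EFinZl //.
apply: ae_eq_integral => //.
- exact/measurable_realfun.measurable_EFinP.
- apply/measurable_realfun.measurable_EFinP; measurable_real.
by apply: filterS Fkf => x /= -> _.
Qed.

End expectation_scale.

Lemma SSW_uZ_neq0_ae {R : realType} {d} {Om : measurableType d}
    {P : probability Om R} {N T : nat} {Z : src N T -> Om -> R} :
  (0 < N)%N -> (2 <= T)%N ->
  (forall k, measurable_fun setT (Z k)) -> (forall k, std_normal_rv P (Z k)) ->
  mutually_independent P Z ->
  {ae P, forall om, SSW (uZ Z om) != 0}.
Proof.
move=> N0 T2 mZ lawZ indZ.
pose a : src N T := inl (inl (inl (Ordinal N0, Ordinal (ltnW T2)))).
pose b : src N T := inl (inl (inl (Ordinal N0, Ordinal T2))).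
exists [set om | Z a om = Z b om]; split.
- exact: measurable_eq_set.
- apply: prob_eq0 => // A B mA mB.
  exact: mutually_independent_pair.
move=> om /= /negP; rewrite negbK => /eqP /SSW_eq0 row_const.
by rewrite /a /b -!/(uZ Z om _ _) !row_const.
Qed.

Theorem theorem4 (R : realType) (d : measure_display) (Om : measurableType d)
  (P : probability Om R) (N T : nat)
  (Z : src N T -> Om -> R)
  (a beta se sm sx tau rho alpha alphat rhot : R)
  (sehat smhat : ('I_N -> 'I_T -> R) -> ('I_N -> 'I_T -> R) -> R)
  (cstar : R) :
  (2 <= N)%N -> (2 <= T)%N ->
  (forall k, measurable_fun setT (Z k)) ->
  (forall k, std_normal_rv P (Z k)) ->
  mutually_independent P Z ->
  0 < se -> 0 < sm -> 0 < sx -> -1 < tau < 1 -> 0 <= rho < 1 ->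
  0 < alpha < 1 -> 0 < alphat < 1 -> 0 < rhot < 1 ->
  (forall y x, 0 < sehat y x) -> (forall y x, 0 <= smhat y x) ->
  measurable_fun setT (fun om => sehat (Yobs Z a beta se sm sx tau rho om)
                                        (Xobs Z sx rho om)) ->
  measurable_fun setT (fun om => smhat (Yobs Z a beta se sm sx tau rho om)
                                        (Xobs Z sx rho om)) ->
  (* c* : the c with P(beta in J_c(sehat)) = c_min *)
  0 < cstar < 1 ->
  fine (P [set om | covers beta
            (Jc cstar (sehat (Yobs Z a beta se sm sx tau rho om) (Xobs Z sx rho om))
                (Yobs Z a beta se sm sx tau rho om) (Xobs Z sx rho om))])
  = inf [set cov | exists tau' psi' rho',
           [/\ -1 < tau' < 1, 0 < psi', 0 <= rho' <= rhot &
            cov = fine (P [set om | covers beta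
              (Kint alpha alphat
                 (sehat (Yobs Z a beta se (psi' * se) sx tau' rho' om) (Xobs Z sx rho' om))
                 (smhat (Yobs Z a beta se (psi' * se) sx tau' rho' om) (Xobs Z sx rho' om))
                 (Yobs Z a beta se (psi' * se) sx tau' rho' om) (Xobs Z sx rho' om))])]] ->
  let Y := Yobs Z a beta se sm sx tau rho in
  let X := Xobs Z sx rho in
  let seh := fun om => sehat (Y om) (X om) in
  let smh := fun om => smhat (Y om) (X om) in
  let Su := fun om => \sum_(i < N) \sum_(t < T) (uZ Z om i t - rowmean (uZ Z om) i) ^+ 2 in
  let Bev := fun om => pretestB alphat (seh om) (smh om) (Y om) (X om) in
  fine ('E_P[fun om => ilength (Kint alpha alphat (seh om) (smh om) (Y om) (X om))])
  / fine ('E_P[fun om => ilength (Jc cstar (seh om) (Y om) (X om))])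
  = zq (1 - alpha / 2) / zq ((cstar + 1) / 2) *
    (fine ('E_P[fun om => (seh om / se) * (Num.sqrt (Su om))^-1 *
                  (Num.sqrt (what (seh om) (smh om) (X om)) * (Bev om)%:R
                   + (~~ Bev om)%:R)])
     / fine ('E_P[fun om => (seh om / se) * (Num.sqrt (Su om))^-1])).
Proof.
move=> N2 T2 mZ lawZ indZ se0 _ sx0 _ /andP[_ rho1] _ _ _ sehat0 _ mseh msmh _ _
  Y X seh smh Su Bev.
have T0 : (0 < T)%N by exact: ltnW T2.
have mX i t : measurable_fun setT (fun om => X om i t).
  by rewrite /X /Xobs /xdata /uZ /vZ; measurable_real.
have mY i t : measurable_fun setT (fun om => Y om i t).
  by rewrite /Y /Yobs /ydata /xdata /mudata /rowmean /uZ /vZ /wZ /eZ; measurable_real.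
have mSu : measurable_fun setT Su by rewrite /Su /rowmean /uZ; measurable_real.
have mBev : measurable_fun setT Bev := measurable_pretestB mY mX mseh msmh alphat.
have mwhat := measurable_what mX mseh msmh.
pose s := se / Num.sqrt (sx ^+ 2 * (1 - rho)).
pose g om := seh om / se * (Num.sqrt (SSW (uZ Z om)))^-1.
pose h om := Num.sqrt (what (seh om) (smh om) (X om)) * (Bev om)%:R + (~~ Bev om)%:R.
have g0 om : 0 <= g om.
  by apply: mulr_ge0; rewrite ?invr_ge0 ?sqrtr_ge0 // divr_ge0 ?(ltW se0) ?(ltW (sehat0 _ _)).
have h0 om : 0 <= h om.
  by apply: addr_ge0; [apply: mulr_ge0|]; rewrite ?sqrtr_ge0 ?ler0n.
have EJ : ('E_P[fun om => ilength (Jc cstar (seh om) (Y om) (X om))] =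
    (2 * s * zq ((cstar + 1) / 2))%:E * 'E_P[g])%E.
  apply: expectation_ae_scale => //; first exact: measurable_ilength_Jc.
    by rewrite /g; measurable_real.
  by apply: aeW => om; apply: ilength_Jc_xdata; rewrite ?gt_eqF ?ltW.
have EK : ('E_P[fun om => ilength (Kint alpha alphat (seh om) (smh om) (Y om) (X om))] =
    (2 * s * zq (1 - alpha / 2))%:E * 'E_P[fun om => (g om * h om)%R])%E.
  apply: expectation_ae_scale; first exact: measurable_ilength_Kint.
  - by rewrite /g /h; measurable_real.
  - by move=> om; rewrite mulr_ge0.
  apply: filterS (SSW_uZ_neq0_ae (ltnW N2) T2 mZ lawZ indZ) => om SSW_neq0.
  by apply: ilength_Kint_xdata => //; exact: sehat0.
rewrite EK EJ !fine_EFinM; apply: div_cancel_common_factor.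
by rewrite !mulf_neq0 ?pnatr_eq0 ?invr_eq0 ?gt_eqF ?sqrtr_gt0 ?mulr_gt0 ?exprn_gt0 ?subr_gt0.
Qed.
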